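(* Let $\mathcal{W}$ be a non-empty, compact and convex subset of $\mathbb{R}^m$, and consider the geometric mixture $\textsc{geo}$ with parameter space $\mathcal{W}$. Then for every probability matrix $\mathbf{P}$ over $\mathcal{P}_+$ and every $x\in\mathcal{X}$, the function $\mathbf{w}\mapsto\ell(x,\textsc{geo}(\mathbf{w},\mathbf{P}))$ is convex and differentiable on $\mathcal{W}$, and for all $\mathbf{w}\in\mathcal{W}$ $$\lvert\nabla_{\mathbf{w}}\ell(x,\textsc{geo}(\mathbf{w},\mathbf{P}))\rvert^2\le a\,\ell(x,\textsc{geo}(\mathbf{w},\mathbf{P}))$$ for every $a\ge\frac{m}{\log_2 e}\log_2^2\!\big(p_{\max}(\mathbf{P})/p_{\min}(\mathbf{P})\big)$. In particular $\textsc{geo}$ satisfies the properties of a nice mixture, with the constant in the gradient condition given by this bound.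
   Context: $\mathcal{X}=\{1,\dots,N\}$, $1<N<\infty$; $\mathcal{P}_+$ is the set of distributions on $\mathcal{X}$ with positive probability on each letter; $m>1$. A probability matrix over $\mathcal{P}_+$ is $\mathbf{P}=(\mathbf{p}(1)\cdots\mathbf{p}(N))$ with $\mathbf{p}(x)=(p_1(x),\dots,p_m(x))^{\mathsf T}$, $p_i\in\mathcal{P}_+$. $p_{\max}(\mathbf{P}):=\max_{x\in\mathcal{X}}\max_{1\le i\le m}p_i(x)$, $p_{\min}(\mathbf{P}):=\min_{x\in\mathcal{X}}\min_{1\le i\le m}p_i(x)$. $\ell(x,p):=-\log_2p(x)$. The geometric mixture is $\textsc{geo}(x;\mathbf{w},\mathbf{P}):=\prod_{i=1}^mp_i(x)^{w_i}\big/\sum_{y\in\mathcal{X}}\prod_{i=1}^mp_i(y)^{w_i}$ for $\mathbf{w}\in\mathbb{R}^m$. A mixture with parameter space $\mathcal{W}$ is nice if $\mathcal{W}$ is non-empty, compact, convex, $\mathbf{w}\mapsto\ell(x,\textsc{mix}(\mathbf{w},\mathbf{P}))$ is convex and differentiable on $\mathcal{W}$ for all $\mathbf{P},x$, and there is $a>0$ with $\lvert\nabla_{\mathbf{w}}\ell(x,\textsc{mix}(\mathbf{w},\mathbf{P}))\rvert^2\le a\,\ell(x,\textsc{mix}(\mathbf{w},\mathbf{P}))$ for all $\mathbf{w},\mathbf{P},x$. *)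

From HB Require Import structures.
From mathcomp Require Import all_boot all_order all_algebra.
From mathcomp Require Import all_classical all_reals all_analysis.
Set Implicit Arguments. Unset Strict Implicit. Unset Printing Implicit Defensive.
Import Order.TTheory GRing.Theory Num.Theory.
Import numFieldNormedType.Exports.
Local Open Scope classical_set_scope.
Local Open Scope ring_scope.

(* Alphabet X = {1,...,N} is modelled by 'I_N; experts are indexed by 'I_m.
   A probability matrix P : 'M[R]_(m, N) has P i x = p_i(x). *)

Definition log2 {R : realType} (x : R) : R := ln x / ln 2.

Definition prob_matrix_pos {R : realType} (m N : nat) (P : 'M[R]_(m, N)) : Prop :=
  (forall i x, 0 < P i x) /\ (forall i, \sum_(x < N) P i x = 1).

Definition pmax {R : realType} (m N : nat) (P : 'M[R]_(m, N)) : R :=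
  \big[Num.max/0]_(i < m) \big[Num.max/0]_(x < N) P i x.

Definition pmin {R : realType} (m N : nat) (P : 'M[R]_(m, N)) : R :=
  \big[Num.min/1]_(i < m) \big[Num.min/1]_(x < N) P i x.

Definition geo_num {R : realType} (m N : nat) (w : 'rV[R]_m) (P : 'M[R]_(m, N))
  (y : 'I_N) : R := \prod_(i < m) (P i y) `^ (w ord0 i).

Definition geo {R : realType} (m N : nat) (x : 'I_N) (w : 'rV[R]_m)
  (P : 'M[R]_(m, N)) : R :=
  geo_num w P x / \sum_(y < N) geo_num w P y.

Definition loss {R : realType} (p : R) : R := - log2 p.

Definition convex_fun_on {R : realType} (m : nat) (W : set 'rV[R]_m)
  (f : 'rV[R]_m -> R) : Prop :=
  forall u v, W u -> W v -> forall t : R, 0 <= t <= 1 ->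
    f (t *: u + (1 - t) *: v) <= t * f u + (1 - t) * f v.

Definition grad_norm2 {R : realType} (m : nat) (f : 'rV[R]_m -> R)
  (w : 'rV[R]_m) : R :=
  \sum_(i < m) ('D_(delta_mx ord0 i) f w) ^+ 2.

From HB Require Import structures.
From mathcomp Require Import all_boot all_order all_algebra.
From mathcomp Require Import all_classical all_reals all_analysis.
From mathcomp Require Import ring lra.
Import Order.TTheory GRing.Theory Num.Theory.
Import numFieldNormedType.Exports.
Local Open Scope classical_set_scope.
Local Open Scope ring_scope.

(* Writing s_y(w) = \sum_j w_j ln p_j(y), the loss is
   (ln \sum_y exp s_y(w) - s_x(w)) / ln 2: a log-sum-exp of linear forms minus
   a linear form, hence convex and smooth.  Its i-th partial derivative is
   (E_q[ln p_i] - ln p_i(x)) / ln 2 with q = geo(.; w, P); since every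
   difference ln p_i(y) - ln p_i(x) lies in [-L, L] for L = ln(pmax/pmin), it
   is at most (1 - q(x)) L / ln 2 in absolute value.  Summing over the m
   coordinates and using (1 - q)^2 <= 1 - q <= -ln q bounds the squared
   gradient by m log2^2(pmax/pmin) ln 2 times the loss -ln q(x) / ln 2. *)

Section ExpFacts.
Context {R : realType}.

Lemma sumr_expR_gt0 {I : finType} (i0 : I) (c : I -> R) : 0 < \sum_i expR (c i).
Proof.
rewrite (bigD1 i0) //=; apply: ltr_pwDl; first exact: expR_gt0.
by apply: sumr_ge0 => i _; exact: expR_ge0.
Qed.

Lemma expR_convex (p q t : R) : 0 <= t <= 1 ->
  expR (t * p + (1 - t) * q) <= t * expR p + (1 - t) * expR q.
Proof.
by case/andP=> t0 t1; have := convex_expR (Itv01 t0 t1) p q; rewrite !convRE.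
Qed.

Lemma lse_convex {I : finType} (i0 : I) (a b : I -> R) {t : R} : 0 <= t <= 1 ->
  ln (\sum_i expR (t * a i + (1 - t) * b i)) <=
  t * ln (\sum_i expR (a i)) + (1 - t) * ln (\sum_i expR (b i)).
Proof.
move=> t01; have A0 := sumr_expR_gt0 i0 a; have B0 := sumr_expR_gt0 i0 b.
set A := \sum_i expR (a i) in A0 *; set B := \sum_i expR (b i) in B0 *.
set z := t * ln A + (1 - t) * ln B.
rewrite -ler_expR lnK ?posrE ?sumr_expR_gt0 //.
(* Normalising by A and B turns the claim into convexity of exp, termwise. *)
have normalised : (\sum_i expR (t * a i + (1 - t) * b i)) / expR z <= 1.
  have -> : (\sum_i expR (t * a i + (1 - t) * b i)) / expR z =
            \sum_i expR (t * (a i - ln A) + (1 - t) * (b i - ln B)).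
    by rewrite mulr_suml; apply: eq_bigr => i _; rewrite -expRB /z; congr expR; ring.
  apply: (@le_trans _ _ (\sum_i (t * expR (a i - ln A) + (1 - t) * expR (b i - ln B)))).
    by apply: ler_sum => i _; exact: expR_convex.
  rewrite big_split /= -!mulr_sumr.
  under eq_bigr do rewrite expRB.
  under [X in _ + _ * X]eq_bigr do rewrite expRB.
  by rewrite -!mulr_suml !lnK ?posrE // !mulfV ?gt_eqF //; lra.
by rewrite ler_pdivrMr ?expR_gt0 // mul1r in normalised.
Qed.

Lemma ln_le_subr1 {q : R} : 0 < q -> ln q <= q - 1.
Proof.
by move=> q0; have := @le_ln1Dx R (q - 1); rewrite addrCA subrr addr0; apply; lra.
Qed.

Lemma sqr_onem_le_oppln (q : R) : 0 < q <= 1 -> (1 - q) ^+ 2 <= - ln q.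
Proof. by case/andP=> q0 q1; have := ln_le_subr1 q0; nra. Qed.

End ExpFacts.

Section LineDerivatives.
Context {R : realType}.

Lemma derive_lineE m (f : 'rV[R]_m -> R) w v :
  'D_v f w = derive1 (fun t : R => f (t *: v + w)) 0.
Proof.
rewrite /derive /derive1 /=.
suff -> : (fun h : R => h^-1 *: ((f \o shift w) (h *: v) - f w)) =
  (fun h : R => h^-1 *: (f ((h + 0) *: v + w) - f (0 *: v + w))) by [].
by apply/funext => h /=; rewrite addr0 scale0r add0r.
Qed.

Lemma is_derive_affine (a c : R) : is_derive (0 : R) 1 (fun t : R => t * a + c) a.
Proof.
have -> : (fun t : R => t * a + c) = (id * cst a) + cst c by [].
by apply: is_derive_eq; rewrite scale0r add0r addr0 /= [_%:A]mulr1.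
Qed.

Lemma is_derive_lse_line {n : nat} (i0 : 'I_n) (a c : 'I_n -> R) :
  is_derive (0 : R) 1 (fun t : R => ln (\sum_i expR (t * a i + c i)))
    ((\sum_i expR (c i) * a i) / \sum_i expR (c i)).
Proof.
have -> : (fun t : R => ln (\sum_i expR (t * a i + c i))) =
          @ln R \o (\sum_i (expR \o (fun t : R => t * a i + c i))).
  by apply/funext => t /=; rewrite fct_sumE.
apply: is_derive_eq.
  apply: is_derive1_comp.
    rewrite fct_sumE /=; apply: is_derive1_ln.
    under eq_bigr do rewrite mul0r add0r.
    exact: sumr_expR_gt0 i0 _.
rewrite mulrC; congr (_ * _).
  by apply: eq_bigr => i _ /=; rewrite mul0r add0r scaler0 add0r addr0 [_%:A]mulr1.
by congr (_^-1); apply: eq_bigr => i _; rewrite mul0r add0r.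
Qed.

End LineDerivatives.

Lemma sqr_mean_sub_le (R : realType) (I : finType) (q z : I -> R) (x : I) (L : R) :
  (forall y, 0 <= q y) -> \sum_y q y = 1 -> (forall y, `|z y - z x| <= L) ->
  (\sum_y q y * z y - z x) ^+ 2 <= ((1 - q x) * L) ^+ 2.
Proof.
move=> q_ge0 q_sum1 zL.
have devE : \sum_y q y * z y - z x = \sum_(y | y != x) q y * (z y - z x).
  rewrite -[in LHS](mul1r (z x)) -q_sum1 mulr_suml -sumrB (bigD1 x) //=.
  by rewrite subrr add0r; apply: eq_bigr => y _; rewrite mulrBr.
have qxE : 1 - q x = \sum_(y | y != x) q y.
  by rewrite -q_sum1 (bigD1 x) //= addrAC subrr add0r.
have dev_le : `|\sum_y q y * z y - z x| <= (1 - q x) * L.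
  rewrite devE qxE mulr_suml; apply: le_trans (ler_norm_sum _ _ _) _.
  by apply: ler_sum => y _; rewrite normrM ger0_norm // ler_wpM2l.
by rewrite -real_normK ?num_real // lerXn2r ?nnegrE ?(le_trans _ dev_le).
Qed.

Section GeometricMixture.
Context {R : realType} {N m : nat} {P : 'M[R]_(m, N)}.
Hypothesis P_gt0 : forall i y, 0 < P i y.
Hypothesis N_gt0 : (0 < N)%N.

Let y0 : 'I_N := Ordinal N_gt0.

Definition geo_score (y : 'I_N) (w : 'rV[R]_m) : R :=
  \sum_(j < m) w ord0 j * ln (P j y).

Definition geo_den (w : 'rV[R]_m) : R := \sum_(y < N) expR (geo_score y w).

Lemma geo_den_gt0 w : 0 < geo_den w.
Proof. exact: sumr_expR_gt0 y0 _. Qed.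

Lemma geo_numE w y : geo_num w P y = expR (geo_score y w).
Proof.
rewrite /geo_num /geo_score expR_sum; apply: eq_bigr => j _.
by rewrite /powR (gt_eqF (P_gt0 _ _)).
Qed.

Lemma geoE x w : geo x w P = expR (geo_score x w) / geo_den w.
Proof. by rewrite /geo geo_numE; under eq_bigr do rewrite geo_numE. Qed.

Lemma geo_gt0 x w : 0 < geo x w P.
Proof. by rewrite geoE divr_gt0 ?expR_gt0 ?geo_den_gt0. Qed.

Lemma sum_geo w : \sum_(y < N) geo y w P = 1.
Proof.
under eq_bigr do rewrite geoE.
by rewrite -mulr_suml mulfV // gt_eqF // geo_den_gt0.
Qed.

Lemma geo_le1 x w : geo x w P <= 1.
Proof.
rewrite -(sum_geo w) (bigD1 x) //= lerDl.
by apply: sumr_ge0 => y _; exact: ltW (geo_gt0 y w).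
Qed.

Lemma loss_geoE x :
  (fun w => loss (geo x w P)) = (fun w => (ln (geo_den w) - geo_score x w) / ln 2).
Proof.
apply/funext => w; rewrite /loss /log2 geoE ln_div ?posrE ?expR_gt0 ?geo_den_gt0 //.
by rewrite expRK -mulNr opprB.
Qed.

Lemma geo_score_convex_comb y (u v : 'rV[R]_m) t :
  geo_score y (t *: u + (1 - t) *: v) = t * geo_score y u + (1 - t) * geo_score y v.
Proof.
rewrite /geo_score !mulr_sumr -big_split.
by apply: eq_bigr => j _; rewrite !mxE /=; ring.
Qed.

Lemma geo_score_shift y i t (w : 'rV[R]_m) :
  geo_score y (t *: delta_mx ord0 i + w) = t * ln (P i y) + geo_score y w.
Proof.
rewrite /geo_score; under eq_bigr do rewrite !mxE /= mulrDl.
rewrite big_split /= (bigD1 i) //= eqxx mulr1 big1 ?addr0 // => j /negbTE ji.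
by rewrite ji mulr0 mul0r.
Qed.

Lemma differentiable_geo_score y w : differentiable (geo_score y) w.
Proof.
have -> : geo_score y = \sum_(j < m) ((fun w : 'rV[R]_m => w ord0 j) * cst (ln (P j y))).
  by rewrite fct_sumE; apply/funext => u; rewrite /geo_score; apply: eq_bigr.
apply: differentiable_sum => j; apply: differentiableM; last exact: differentiable_cst.
exact: differentiable_coord.
Qed.

Lemma differentiable_geo_den w : differentiable geo_den w.
Proof.
have -> : geo_den = \sum_(y < N) (expR \o geo_score y).
  by rewrite fct_sumE; apply/funext => u; rewrite /geo_den; apply: eq_bigr.
apply: differentiable_sum => y; apply: differentiable_comp.
  exact: differentiable_geo_score.
by apply/derivable1_diffP; exact: ex_derive.
Qed.

Section Loss.
Variable x : 'I_N.

Let f := fun w : 'rV[R]_m => loss (geo x w P).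

Lemma loss_geo_ge0 w : 0 <= f w.
Proof.
rewrite /f /loss /log2 -mulNr divr_ge0 ?oppr_ge0 ?ln_le0 ?geo_le1 //.
by rewrite ltW // ln_gt0 // ltr1n.
Qed.

Lemma convex_loss_geo (W : set 'rV[R]_m) : convex_fun_on W f.
Proof.
rewrite /f loss_geoE => u v _ _ t t01; rewrite /geo_den geo_score_convex_comb.
under eq_bigr do rewrite geo_score_convex_comb.
have lse := lse_convex y0 (geo_score^~ u) (geo_score^~ v) t01.
have l2 : 0 < (ln (2 : R))^-1 by rewrite invr_gt0 ln_gt0 // ltr1n.
by have := ler_wpM2r (ltW l2) lse; rewrite !mulrDl; lra.
Qed.

Lemma differentiable_loss_geo w : differentiable f w.
Proof.
rewrite /f loss_geoE.
have -> : (fun w => (ln (geo_den w) - geo_score x w) / ln 2) =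
          ((@ln R \o geo_den) - geo_score x) * cst (ln 2)^-1 by [].
apply: differentiableM; last exact: differentiable_cst.
apply: differentiableB; last exact: differentiable_geo_score.
apply: differentiable_comp; first exact: differentiable_geo_den.
by apply/derivable1_diffP; apply: ex_derive; apply: is_derive1_ln; exact: geo_den_gt0.
Qed.

Lemma partial_loss_geo i w :
  'D_(delta_mx ord0 i) f w =
  (\sum_(y < N) geo y w P * ln (P i y) - ln (P i x)) / ln 2.
Proof.
rewrite /f loss_geoE derive_lineE /geo_den.
under [X in derive1 X]funext => t do under eq_bigr do rewrite geo_score_shift.
under [X in derive1 X]funext => t do rewrite geo_score_shift.
have -> : (fun t : R => (ln (\sum_(y < N) expR (t * ln (P i y) + geo_score y w)) -
            (t * ln (P i x) + geo_score x w)) / ln 2) =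
          ((fun t : R => ln (\sum_(y < N) expR (t * ln (P i y) + geo_score y w))) -
           (fun t : R => t * ln (P i x) + geo_score x w)) * cst (ln 2)^-1 by [].
rewrite derive1E; apply: derive_val.
have := is_derive_lse_line y0 (fun y => ln (P i y)) (geo_score^~ w).
have := is_derive_affine (ln (P i x)) (geo_score x w).
move=> d_aff d_lse; apply: is_derive_eq.
rewrite scaler0 add0r /= [_ *: _]mulrC mulr_suml; congr ((_ - _) / _).
by apply: eq_bigr => y _; rewrite geoE mulrAC.
Qed.

End Loss.

Lemma pmin_gt0 : 0 < pmin P.
Proof.
rewrite /pmin; elim/big_ind: _ => // [a b a0 b0|i _]; first by rewrite lt_min a0 b0.
by elim/big_ind: _ => // a b a0 b0; rewrite lt_min a0 b0.
Qed.

Lemma pmin_le i y : pmin P <= P i y.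
Proof. by rewrite /pmin; apply: le_trans; [exact: (bigmin_le _ i) | exact: bigmin_le]. Qed.

Lemma pmax_ge i y : P i y <= pmax P.
Proof. by rewrite /pmax; apply: le_trans; last exact: (le_bigmax _ _ i); exact: le_bigmax. Qed.

Lemma ln_ratio_le i y z : ln (P i y) - ln (P i z) <= ln (pmax P / pmin P).
Proof.
have pmax_gt0 : 0 < pmax P := lt_le_trans (P_gt0 i y) (pmax_ge i y).
rewrite ln_div ?posrE ?pmin_gt0 //; apply: lerB.
  by rewrite ler_ln ?posrE // pmax_ge.
by rewrite ler_ln ?posrE ?pmin_gt0 // pmin_le.
Qed.

Lemma grad_norm2_loss_geo_le x w :
  grad_norm2 (fun w => loss (geo x w P)) w <=
  m%:R * log2 (pmax P / pmin P) ^+ 2 * (1 - geo x w P) ^+ 2.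
Proof.
rewrite /grad_norm2.
apply: (@le_trans _ _ (\sum_(i < m) (log2 (pmax P / pmin P) * (1 - geo x w P)) ^+ 2)).
  apply: ler_sum => i _; rewrite partial_loss_geo /log2 mulrAC !expr_div_n.
  rewrite ler_wpM2r ?invr_ge0 ?exprn_ge0 ?ln_ge0 ?ler1n // [_ * (1 - _)]mulrC.
  apply: sqr_mean_sub_le => [y||y]; first exact: ltW (geo_gt0 y w).
    exact: sum_geo.
  by rewrite ler_norml lerNl opprB !ln_ratio_le.
by rewrite sumr_const card_ord -[_ *+ m]mulr_natl exprMn mulrA.
Qed.

End GeometricMixture.

Theorem lemma1 (R : realType) (N m : nat) (hN : (1 < N)%N) (hm : (1 < m)%N)
  (W : set 'rV[R]_m) :
  W !=set0 -> compact W -> convex_set W ->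
  forall (P : 'M[R]_(m, N)), prob_matrix_pos P ->
  forall x : 'I_N,
    let f := fun w : 'rV[R]_m => loss (geo x w P) in
    convex_fun_on W f /\
    (forall w, W w -> differentiable f w) /\
    (forall a : R,
       a >= (m%:R / log2 (expR 1)) * (log2 (pmax P / pmin P)) ^+ 2 ->
       forall w, W w -> grad_norm2 f w <= a * f w).
Proof.
move=> _ _ _ P [P_gt0 _] x f.
have N_gt0 : (0 < N)%N := ltnW hN.
split; first exact: convex_loss_geo.
split=> [w _|a a_ge w _]; first exact: differentiable_loss_geo.
have q_gt0 := geo_gt0 P_gt0 N_gt0 x w; have q_le1 := geo_le1 P_gt0 N_gt0 x w.
apply: le_trans (grad_norm2_loss_geo_le P_gt0 N_gt0 x w) _.
apply: le_trans (ler_wpM2r (loss_geo_ge0 P_gt0 N_gt0 x w) a_ge).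
(* log2 e * loss = -ln q, so the right-hand side is m log2^2(pmax/pmin) (-ln q). *)
have l2 : ln (2 : R) != 0 by rewrite gt_eqF // ln_gt0 // ltr1n.
have -> : m%:R / log2 (expR 1) * log2 (pmax P / pmin P) ^+ 2 * f w =
          m%:R * log2 (pmax P / pmin P) ^+ 2 * - ln (geo x w P).
  by rewrite /f /loss /log2 expRK; field.
apply: ler_wpM2l; first by rewrite mulr_ge0 ?sqr_ge0.
by rewrite sqr_onem_le_oppln // q_gt0.
Qed.
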